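(* Let $A\subseteq B$ be an extension of commutative rings such that $B$ has only finitely many maximal ideals. Then the canonical map $\mathfrak{C}(A,B)\to\operatorname{Pic}(A)$, sending the class of an invertible ideal $L$ to $[L]$, is an isomorphism of groups.
   Context: For an extension of rings $A\subseteq B$ and $A$-submodules $L,L'$ of $B$, $LL'$ is the $A$-submodule of finite sums $\sum x_ky_k$. An $A$-submodule $L$ of $B$ is an invertible ideal of $A\subseteq B$ if $LL'=A$ for some $A$-submodule $L'$ of $B$; these form an abelian group $\mathscr{G}(A,B)$ and $\mathfrak{C}(A,B)=\mathscr{G}(A,B)/\{Ax:x\in B^\ast\}$. $\operatorname{Pic}(A)$ is the group of isomorphism classes of finitely generated projective $A$-modules of constant rank $1$ under $\otimes_A$; invertible ideals are such modules. *)

From HB Require Import structures.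
From mathcomp Require Import all_boot all_order all_algebra.
Set Implicit Arguments. Unset Strict Implicit. Unset Printing Implicit Defensive.
Import GRing.Theory.
Local Open Scope ring_scope.

Definition is_ideal (R : comPzRingType) (I : R -> Prop) : Prop :=
  I 0 /\ (forall x y, I x -> I y -> I (x + y)) /\ (forall r x, I x -> I (r * x)).

Definition is_prime_ideal (R : comPzRingType) (I : R -> Prop) : Prop :=
  is_ideal I /\ ~ I 1 /\ (forall x y, I (x * y) -> I x \/ I y).

Definition is_maximal_ideal (R : comPzRingType) (I : R -> Prop) : Prop :=
  is_ideal I /\ ~ I 1 /\
  (forall J : R -> Prop, is_ideal J -> ~ J 1 -> (forall x, I x -> J x) ->
     forall x, J x -> I x).

Definition finitely_many_maximal_ideals (R : comPzRingType) : Prop :=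
  exists n (Ms : 'I_n -> R -> Prop),
    forall I : R -> Prop, is_maximal_ideal I -> exists i, forall x, I x <-> Ms i x.

Section Ext.
Variables (A B : comPzRingType) (f : {rmorphism A -> B}).

Definition Asubmod (L : B -> Prop) : Prop :=
  L 0 /\ (forall x y, L x -> L y -> L (x + y)) /\ (forall a x, L x -> L (f a * x)).

Definition subprod (L L' : B -> Prop) (z : B) : Prop :=
  exists n (xs ys : 'I_n -> B),
    (forall i, L (xs i) /\ L' (ys i)) /\ z = \sum_(i < n) xs i * ys i.

Definition Aimg (z : B) : Prop := exists a, z = f a.

Definition eqsub (L L' : B -> Prop) : Prop := forall z, L z <-> L' z.

Definition invertible (L : B -> Prop) : Prop :=
  Asubmod L /\ exists L', Asubmod L' /\ eqsub (subprod L L') Aimg.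

Definition unitB (x : B) : Prop := exists y, x * y = 1.

Definition principal (x : B) (z : B) : Prop := exists a, z = f a * x.

(* equality of classes in C(A,B) = G(A,B) / {Ax : x in B^*} *)
Definition same_class (L L' : B -> Prop) : Prop :=
  exists x, unitB x /\ eqsub L' (subprod L (principal x)).

Definition submod_iso (L L' : B -> Prop) : Prop :=
  exists g : B -> B,
    (forall x y, L x -> L y -> g (x + y) = g x + g y) /\
    (forall a x, L x -> g (f a * x) = f a * g x) /\
    (forall x y, L x -> L y -> g x = g y -> x = y) /\
    (forall z, L' z <-> exists x, L x /\ z = g x).

Definition iso_to_sub (M : lmodType A) (L : B -> Prop) : Prop :=
  exists phi : M -> B,
    (forall m n, phi (m + n) = phi m + phi n) /\
    (forall a m, phi (a *: m) = f a * phi m) /\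
    injective phi /\
    (forall z, L z <-> exists m, z = phi m).

Definition mult_is_tensor (L L' : B -> Prop) : Prop :=
  forall (N : lmodType A) (beta : B -> B -> N),
    (forall x x' y, L x -> L x' -> L' y -> beta (x + x') y = beta x y + beta x' y) ->
    (forall x y y', L x -> L' y -> L' y' -> beta x (y + y') = beta x y + beta x y') ->
    (forall a x y, L x -> L' y ->
        beta (f a * x) y = a *: beta x y /\ beta x (f a * y) = a *: beta x y) ->
    exists h : B -> N,
      ((forall z z', subprod L L' z -> subprod L L' z' -> h (z + z') = h z + h z') /\
       (forall a z, subprod L L' z -> h (f a * z) = a *: h z)) /\
      (forall x y, L x -> L' y -> h (x * y) = beta x y) /\
      (forall h' : B -> N,
        (forall z z', subprod L L' z -> subprod L L' z' -> h' (z + z') = h' z + h' z') ->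
        (forall a z, subprod L L' z -> h' (f a * z) = a *: h' z) ->
        (forall x y, L x -> L' y -> h' (x * y) = beta x y) ->
        forall z, subprod L L' z -> h' z = h z).
End Ext.

Section Pic.
Variable A : comPzRingType.

Definition Alinear (M N : lmodType A) (h : M -> N) : Prop :=
  (forall x y, h (x + y) = h x + h y) /\ (forall a x, h (a *: x) = a *: h x).

Definition fin_gen (M : lmodType A) : Prop :=
  exists n (g : 'I_n -> M), forall m, exists c : 'I_n -> A, m = \sum_(i < n) c i *: g i.

Definition projective (M : lmodType A) : Prop :=
  forall (N P : lmodType A) (p : N -> P) (h : M -> P),
    Alinear p -> (forall y, exists x, p x = y) -> Alinear h ->
    exists g : M -> N, Alinear g /\ forall m, p (g m) = h m.

(* M_p is free of rank 1 over A_p (localization written out):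
   some m/1 generates M_p and has zero annihilator in A_p *)
Definition rank1_at (M : lmodType A) (p : A -> Prop) : Prop :=
  exists m : M,
    (forall x : M, exists s a, ~ p s /\ s *: x = a *: m) /\
    (forall a, a *: m = 0 -> exists s, ~ p s /\ s * a = 0).

Definition const_rank1 (M : lmodType A) : Prop :=
  forall p : A -> Prop, is_prime_ideal p -> rank1_at M p.

Definition in_Pic (M : lmodType A) : Prop :=
  fin_gen M /\ projective M /\ const_rank1 M.
End Pic.

(* An invertible ideal L comes with x_i in L and y_i in L^-1 such that
   sum_i x_i y_i = 1.  Then z |-> (z y_i)_i is a projective basis of L, so L is
   finitely generated projective, and locally free of rank one since
   (x_j y_j) z = (z y_j) x_j; every A-linear map g : L -> B is multiplication by
   sum_i g(x_i) y_i, so isomorphic invertible ideals differ by a unit of B; and the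
   same expansion shows that multiplication L x L' -> LL' is universal.
   Conversely, a projective basis (m_i, phi_i) of M in Pic(A) yields the idempotent
   matrix E = (phi_k(m_i)), whose 2x2 minors vanish and which lies in no prime
   ideal, because M is locally free of rank one.  As B has finitely many maximal
   ideals, prime avoidance gives vectors c, d over B with c^T E d a unit; then
   E = a v^T over B with v.a = 1, and m |-> sum_j phi_j(m) a_j embeds M into B as an
   invertible ideal whose inverse is spanned by the v_k. *)

From HB Require Import structures.
From mathcomp Require Import all_boot all_order all_algebra.
From mathcomp Require Import boolp classical_sets ring.
Set Implicit Arguments. Unset Strict Implicit. Unset Printing Implicit Defensive.
Import GRing.Theory.
Local Open Scope ring_scope.

Section Ideals.
Variable R : comPzRingType.
Implicit Types (I J M P : R -> Prop) (x y : R).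

Lemma idealMr I x y : is_ideal I -> I x -> I (x * y).
Proof. by case=> _ [_ IM] Ix; rewrite mulrC; apply: IM. Qed.

Lemma idealN I x : is_ideal I -> I x -> I (- x).
Proof. by case=> _ [_ IM] Ix; rewrite -mulN1r; apply: IM. Qed.

Lemma idealB I x y : is_ideal I -> I x -> I y -> I (x - y).
Proof. by move=> iI Ix Iy; case: (iI) => _ [ID _]; apply: ID (idealN iI Iy). Qed.

Definition proper_ideal_above I J := is_ideal J /\ ~ J 1 /\ (forall x, I x -> J x).

Local Open Scope classical_set_scope.

Lemma proper_ideal_above_bigcup I (F : set (set R)) J0 :
  (forall J x, F J -> J x -> proper_ideal_above I J) -> total_on F subset ->
  F J0 -> proper_ideal_above I J0 -> proper_ideal_above I (\bigcup_(J in F) J).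
Proof.
move=> FP Ftot FJ0 [[J00 _] [_ IJ0]].
split; [split; [|split] | split].
- by exists J0.
- move=> x y [J FJ Jx] [J' FJ' J'y].
  have [[_ [JD _]] _] := FP J x FJ Jx; have [[_ [J'D _]] _] := FP J' y FJ' J'y.
  case: (Ftot J J' FJ FJ') => [JJ'|J'J].
  + by exists J'; last by apply: J'D => //; apply: JJ'.
  + by exists J; last by apply: JD => //; apply: J'J.
- move=> r x [J FJ Jx]; have [[_ [_ JM]] _] := FP J x FJ Jx.
  by exists J => //; apply: JM.
- by move=> [J FJ J1]; have [_ []] := FP J 1 FJ J1.
- by move=> x Ix; exists J0 => //; apply: IJ0.
Qed.

Lemma exists_maximal_ideal_above I : is_ideal I -> ~ I 1 ->
  exists M, is_maximal_ideal M /\ (forall x, I x -> M x).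
Proof.
move=> iI I1.
(* [set0] is admitted only because [Zorn_bigcup] also asks for the union of the empty chain. *)
pose P J := J = set0 \/ proper_ideal_above I J.
have [M [PM Mmax]] : exists M, P M /\ forall J, M `<` J -> ~ P J.
  apply: Zorn_bigcup => F FP Ftot.
  have [F0|] := pselect (forall J, F J -> J = set0).
    by left; apply/seteqP; split=> x //= [J FJ Jx]; rewrite (F0 J FJ) in Jx.
  move=> /existsNP[J0 /not_implyP[FJ0 J0n0]].
  have FP' J x : F J -> J x -> proper_ideal_above I J.
    by move=> FJ Jx; case: (FP J FJ) => // J_0; rewrite J_0 in Jx.
  have [//|PJ0] := FP J0 FJ0.
  by right; apply: proper_ideal_above_bigcup FJ0 PJ0.
have {PM} [iM [M1 IM]] : proper_ideal_above I M.
  case: PM => // M0; exfalso; apply: (Mmax I); last by right.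
  by rewrite M0; split=> // I0; apply: (I0 0); case: iI.
exists M; split=> //; split=> //; split=> // J iJ J1 MJ x Jx.
apply: contrapT => Mx; apply: (Mmax J); last by right; split=> //; split=> // y /IM/MJ.
by split=> // JM; apply/Mx/JM.
Qed.

Lemma maximal_ideal_prime M : is_maximal_ideal M -> is_prime_ideal M.
Proof.
move=> [iM [M1 Mmax]]; split=> //; split=> // x y Mxy.
have [Mx|Mx] := pselect (M x); [by left | right].
pose J z := exists m r, M m /\ z = m + r * x.
have iJ : is_ideal J.
  case: iM => M0 [MD MM]; split; first by exists 0, 0; rewrite mul0r addr0.
  split.
  - move=> _ _ [m [r [Mm ->]]] [m' [r' [Mm' ->]]]; exists (m + m'), (r + r').
    by split; [apply: MD | rewrite mulrDl addrACA].
  - move=> s _ [m [r [Mm ->]]]; exists (s * m), (s * r); split; first exact: MM.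
    by rewrite mulrDr mulrA.
have [m [r [Mm E1]]] : J 1.
  apply: contrapT => J1; apply: Mx; apply: (Mmax J iJ J1).
    by move=> m Mm; exists m, 0; rewrite mul0r addr0.
  by exists 0, 1; rewrite add0r mul1r; split=> //; case: iM.
have -> : y = m * y + r * (x * y) by rewrite mulrA -mulrDl -E1 mul1r.
case: iM => _ [MD MM]; apply: MD; [rewrite mulrC|]; exact: MM.
Qed.

Lemma prime_ideal_prod P n (F : 'I_n -> R) :
  is_prime_ideal P -> (forall i, ~ P (F i)) -> ~ P (\prod_(i < n) F i).
Proof.
move=> [_ [P1 PM]] PF; apply: (big_ind (fun x => ~ P x)) => // x y Px Py.
by case/PM.
Qed.

Lemma unit_of_not_maximal x :
  (forall M, is_maximal_ideal M -> ~ M x) -> unitB x.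
Proof.
move=> xM; apply: contrapT => xU.
pose I z := exists b, z = b * x.
have iI : is_ideal I.
  split; first by exists 0; rewrite mul0r.
  split; first by move=> _ _ [b ->] [b' ->]; exists (b + b'); rewrite mulrDl.
  by move=> r _ [b ->]; exists (r * b); rewrite mulrA.
have I1 : ~ I 1 by move=> [b E]; apply: xU; exists b; rewrite mulrC -E.
have [M [mM IM]] := exists_maximal_ideal_above iI I1.
by apply: (xM M mM); apply: IM; exists 1; rewrite mul1r.
Qed.

Lemma locally_zero x :
  (forall M, is_maximal_ideal M -> exists2 s, ~ M s & s * x = 0) -> x = 0.
Proof.
move=> xM; apply: contrapT => x0.
pose I s := s * x = 0.
have iI : is_ideal I.
  split; first by rewrite /I mul0r.
  split; first by move=> a b; rewrite /I mulrDl => -> ->; rewrite addr0.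
  by move=> r a; rewrite /I -mulrA => ->; rewrite mulr0.
have I1 : ~ I 1 by rewrite /I mul1r.
have [M [mM IM]] := exists_maximal_ideal_above iI I1.
by have [s Ms /IM] := xM M mM.
Qed.

Lemma prime_avoiding_elem P N (S : 'I_N -> Prop) (J : 'I_N -> R -> Prop) :
  is_prime_ideal P -> (forall t, S t -> is_ideal (J t) /\ exists2 y, J t y & ~ P y) ->
  exists2 y, ~ P y & forall t, S t -> J t y.
Proof.
move=> pP SJ.
have /fin_all_exists[ys Hys] : forall t, exists y, ~ P y /\ (S t -> J t y).
  move=> t; have [St|St] := pselect (S t); last first.
    by exists 1; split=> [|/St []]; case: pP => _ [].
  by have [_ [y Jy Py]] := SJ t St; exists y.
exists (\prod_(t < N) ys t); first by apply: prime_ideal_prod => // t; case: (Hys t).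
move=> t St; rewrite (bigD1 t) //=; apply: idealMr; first by case: (SJ t St).
by case: (Hys t) => _ /(_ St).
Qed.

End Ideals.

Lemma additive_on_sum (U V : zmodType) (S : U -> Prop) (g : U -> V) n (F : 'I_n -> U) :
  S 0 -> (forall x y, S x -> S y -> S (x + y)) ->
  (forall x y, S x -> S y -> g (x + y) = g x + g y) ->
  (forall i, S (F i)) -> g (\sum_(i < n) F i) = \sum_(i < n) g (F i).
Proof.
move=> S0 SD gD; elim: n F => [|n IH] F SF.
  by rewrite !big_ord0; apply: (addrI (g 0)); rewrite -gD // !addr0.
rewrite !big_ord_recr /= gD ?IH //; first by apply: (big_ind S) => // i _; apply: SF.
Qed.

Lemma additive_sum (U V : zmodType) (g : U -> V) n (F : 'I_n -> U) :
  (forall x y, g (x + y) = g x + g y) -> g (\sum_(i < n) F i) = \sum_(i < n) g (F i).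
Proof. by move=> gD; apply: (@additive_on_sum _ _ (fun _ => True)). Qed.

Section Extension.
Variables (A B : comPzRingType) (f : {rmorphism A -> B}).
Implicit Types (x y z : B).

Lemma Aimg0 : Aimg f 0. Proof. by exists 0; rewrite rmorph0. Qed.

Lemma AimgD x y : Aimg f x -> Aimg f y -> Aimg f (x + y).
Proof. by move=> [a ->] [b ->]; exists (a + b); rewrite rmorphD. Qed.

Lemma AimgM x y : Aimg f x -> Aimg f y -> Aimg f (x * y).
Proof. by move=> [a ->] [b ->]; exists (a * b); rewrite rmorphM. Qed.

Lemma Aimg_sum n (F : 'I_n -> B) : (forall i, Aimg f (F i)) -> Aimg f (\sum_(i < n) F i).
Proof. by move=> AF; apply: (big_ind (Aimg f)) => //; [exact: Aimg0 | exact: AimgD]. Qed.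

Lemma Asubmod_sum (L : B -> Prop) n (F : 'I_n -> B) :
  Asubmod f L -> (forall i, L (F i)) -> L (\sum_(i < n) F i).
Proof. by move=> [L0 [LD _]] LF; apply: (big_ind L). Qed.

Lemma subprod_mul (L L' : B -> Prop) x y : L x -> L' y -> subprod L L' (x * y).
Proof. by move=> Lx L'y; exists 1%N, (fun _ => x), (fun _ => y); rewrite big_ord1. Qed.

Lemma subprod0 (L L' : B -> Prop) : subprod L L' 0.
Proof. by exists 0%N, (fun _ => 0), (fun _ => 0); rewrite big_ord0; split=> // -[]. Qed.

Lemma subprodD (L L' : B -> Prop) z z' :
  subprod L L' z -> subprod L L' z' -> subprod L L' (z + z').
Proof.
move=> [n [xs [ys [Hs ->]]]] [m [xs' [ys' [Hs' ->]]]].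
exists (n + m)%N, (fun i => match split i with inl j => xs j | inr k => xs' k end),
  (fun i => match split i with inl j => ys j | inr k => ys' k end).
split; first by move=> i; case: (split i).
rewrite big_split_ord; congr (_ + _); apply: eq_bigr => i _.
  by rewrite (unsplitK (inl i)).
by rewrite (unsplitK (inr i)).
Qed.

Lemma subprod_additive_eq (N : zmodType) (L L' : B -> Prop) (h h' : B -> N) :
  (forall z z', subprod L L' z -> subprod L L' z' -> h (z + z') = h z + h z') ->
  (forall z z', subprod L L' z -> subprod L L' z' -> h' (z + z') = h' z + h' z') ->
  (forall x y, L x -> L' y -> h (x * y) = h' (x * y)) ->
  forall z, subprod L L' z -> h z = h' z.
Proof.
move=> hD h'D hh' _ [n [xs [ys [Hs ->]]]].
have Sxy i : subprod L L' (xs i * ys i) by case: (Hs i) => Lx L'y; apply: subprod_mul.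
rewrite (additive_on_sum _ _ hD Sxy) ?(additive_on_sum _ _ h'D Sxy);
  try by [apply: subprod0 | apply: subprodD].
by apply: eq_bigr => i _; case: (Hs i) => Lx L'y; apply: hh'.
Qed.

Lemma subprod_principalP (L : B -> Prop) x z : Asubmod f L ->
  subprod L (principal f x) z <-> exists2 l, L l & z = l * x.
Proof.
move=> HL; split; last first.
  move=> [l Ll ->]; have -> : l * x = l * (f 1 * x) by rewrite rmorph1 mul1r.
  by apply: subprod_mul => //; exists 1.
move=> [n [ls [bs [Hs ->]]]].
have /fin_all_exists[c Hc] i : exists a, bs i = f a * x by case: (Hs i) => _ [a ->]; exists a.
exists (\sum_(i < n) f (c i) * ls i).
  by apply: Asubmod_sum => // i; case: HL => _ [_ LM]; apply: LM; case: (Hs i).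
by rewrite mulr_suml; apply: eq_bigr => i _; rewrite Hc; ring.
Qed.

Definition preimf (b : B) : A :=
  if pselect (exists a, f a = b) is left e then projT1 (cid e) else 0.

Lemma preimfK b : Aimg f b -> f (preimf b) = b.
Proof.
move=> [a ->]; rewrite /preimf; case: pselect => [e|[]]; last by exists a.
by case: (cid e).
Qed.

Hypothesis finj : injective f.

Lemma preimf_f a : preimf (f a) = a.
Proof. by apply: finj; rewrite preimfK //; exists a. Qed.

Lemma preimfD x y : Aimg f x -> Aimg f y -> preimf (x + y) = preimf x + preimf y.
Proof. by move=> [a ->] [b ->]; rewrite -rmorphD !preimf_f. Qed.

Lemma preimfM x y : Aimg f x -> Aimg f y -> preimf (x * y) = preimf x * preimf y.
Proof. by move=> [a ->] [b ->]; rewrite -rmorphM !preimf_f. Qed.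

Lemma preimfZ a y : Aimg f y -> preimf (f a * y) = a * preimf y.
Proof. by move=> [b ->]; rewrite -rmorphM !preimf_f. Qed.

End Extension.

Section DualBasis.
Variables (A B : comPzRingType) (f : {rmorphism A -> B}).
Implicit Types (x y z w : B).

Definition dual_basis (L : B -> Prop) n (xs ys : 'I_n -> B) : Prop :=
  [/\ forall i, L (xs i), forall i z, L z -> Aimg f (z * ys i)
    & \sum_(i < n) xs i * ys i = 1].

Lemma invertible_dual_basis L : invertible f L -> exists n (xs ys : 'I_n -> B), dual_basis L xs ys.
Proof.
move=> [_ [L' [_ E]]].
have [n [xs [ys [Hs H1]]]] : subprod L L' 1 by apply/E; exists 1; rewrite rmorph1.
exists n, xs, ys; split=> [i|i z Lz|//]; first by case: (Hs i).
by apply/E; apply: subprod_mul => //; case: (Hs i).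
Qed.

Section Expansion.
Variables (L : B -> Prop) (n : nat) (xs ys : 'I_n -> B).
Hypotheses (HL : Asubmod f L) (dL : dual_basis L xs ys).

Lemma dual_basis_decomp z : L z -> z = \sum_(i < n) f (preimf f (z * ys i)) * xs i.
Proof.
case: dL => _ LA H1 Lz; rewrite -[z in LHS]mulr1 -H1 mulr_sumr.
by apply: eq_bigr => i _; rewrite (preimfK (LA i z Lz)); ring.
Qed.

Lemma dual_basis_linear_expand (N : zmodType) (s : A -> N -> N) (g : B -> N) :
  (forall x y, L x -> L y -> g (x + y) = g x + g y) ->
  (forall a z, L z -> g (f a * z) = s a (g z)) ->
  forall z, L z -> g z = \sum_(i < n) s (preimf f (z * ys i)) (g (xs i)).
Proof.
case: (HL) => L0 [LD LM] gD gZ z Lz; case: (dL) => Lxs _ _.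
rewrite {1}(dual_basis_decomp Lz) (additive_on_sum L0 LD gD) => [|i]; last exact: LM.
by apply: eq_bigr => i _; rewrite gZ.
Qed.

Lemma dual_basis_mul_expand (g : B -> B) :
  (forall x y, L x -> L y -> g (x + y) = g x + g y) ->
  (forall a z, L z -> g (f a * z) = f a * g z) ->
  forall z, L z -> g z = z * \sum_(i < n) g (xs i) * ys i.
Proof.
case: (dL) => _ LA _ gD gZ z Lz.
rewrite (dual_basis_linear_expand (s := fun a w => f a * w)) // mulr_sumr.
by apply: eq_bigr => i _; rewrite (preimfK (LA i z Lz)); ring.
Qed.

End Expansion.

Lemma same_class_submod_iso L L' :
  Asubmod f L -> same_class f L L' -> submod_iso f L L'.
Proof.
move=> HL [x [[y xy] E]]; exists (fun z => z * x); split; [|split; [|split]].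
- by move=> ? ? _ _; rewrite mulrDl.
- by move=> ? ? _; rewrite mulrA.
- by move=> z z' _ _ E'; rewrite -[z]mulr1 -[z']mulr1 -xy !mulrA E'.
- by move=> z; rewrite (E z) subprod_principalP //; split=> [[l Ll ->] | [l [Ll ->]]]; exists l.
Qed.

Lemma submod_iso_same_class L L' : invertible f L -> invertible f L' ->
  submod_iso f L L' -> same_class f L L'.
Proof.
move=> iL iL' [g [gD [gZ [_ gim]]]].
have HL := proj1 iL; have [n [xs [ys dL]]] := invertible_dual_basis iL.
have [n' [us [vs [Lus _ Huv]]]] := invertible_dual_basis iL'.
set w := \sum_(i < n) g (xs i) * ys i.
have gw := dual_basis_mul_expand HL dL gD gZ.
have L'E z : L' z <-> exists2 l, L l & z = l * w.
  by rewrite gim; split=> [[l [Ll ->]] | [l Ll ->]]; exists l; rewrite ?gw.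
have /fin_all_exists[zs Hzs] j : exists l, L l /\ us j = l * w.
  by have [l Ll ->] := (L'E (us j)).1 (Lus j); exists l.
exists w; split.
  exists (\sum_(j < n') zs j * vs j); rewrite mulr_sumr -Huv.
  by apply: eq_bigr => j _; case: (Hzs j) => _ ->; ring.
by move=> z; rewrite subprod_principalP.
Qed.

Hypothesis finj : injective f.

Lemma invertible_mult_is_tensor L L' :
  invertible f L -> invertible f L' -> mult_is_tensor f L L'.
Proof.
move=> iL iL' N beta bD1 bD2 bZ.
have HL := proj1 iL; have HL' := proj1 iL'.
have [n [xs [ys dL]]] := invertible_dual_basis iL.
have [n' [us [vs dL']]] := invertible_dual_basis iL'.
case: (dL) (dL') => Lxs LA _ [Lus L'A _].
have Aim z i j : subprod L L' z -> Aimg f (z * ys i * vs j).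
  move=> [m [p [q [Hpq ->]]]]; rewrite !mulr_suml; apply: Aimg_sum => k.
  have -> : p k * q k * ys i * vs j = (p k * ys i) * (q k * vs j) by ring.
  by have [Lp L'q] := Hpq k; apply: AimgM; [apply: LA | apply: L'A].
pose h z := \sum_(i < n) \sum_(j < n') preimf f (z * ys i * vs j) *: beta (xs i) (us j).
have hD z z' : subprod L L' z -> subprod L L' z' -> h (z + z') = h z + h z'.
  move=> Hz Hz'; rewrite /h -big_split; apply: eq_bigr => i _.
  rewrite -big_split; apply: eq_bigr => j _.
  by rewrite !mulrDl preimfD ?scalerDl //; apply: Aim.
have hZ a z : subprod L L' z -> h (f a * z) = a *: h z.
  move=> Hz; rewrite /h scaler_sumr; apply: eq_bigr => i _.
  rewrite scaler_sumr; apply: eq_bigr => j _.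
  by rewrite -!mulrA preimfZ ?scalerA ?mulrA //; apply: Aim.
have hxy x y : L x -> L' y -> h (x * y) = beta x y.
  move=> Lx L'y.
  rewrite (dual_basis_linear_expand HL dL (s := *:%R)
    (fun u u' Lu Lu' => bD1 u u' y Lu Lu' L'y) (fun a u Lu => proj1 (bZ a u y Lu L'y)) Lx).
  apply: eq_bigr => i _.
  rewrite (dual_basis_linear_expand HL' dL' (s := *:%R)
    (fun u u' L'u L'u' => bD2 (xs i) u u' (Lxs i) L'u L'u')
    (fun a u L'u => proj2 (bZ a (xs i) u (Lxs i) L'u)) L'y).
  rewrite scaler_sumr; apply: eq_bigr => j _.
  have -> : x * y * ys i * vs j = (x * ys i) * (y * vs j) by ring.
  by rewrite scalerA -(preimfM finj (LA i x Lx) (L'A j y L'y)).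
exists h; split=> //; split=> // h' h'D h'Z h'xy.
by apply: subprod_additive_eq => // x y Lx L'y; rewrite hxy ?h'xy.
Qed.

End DualBasis.

Section ProjectiveBasis.
Variables (A : comPzRingType) (M : lmodType A).

Definition projective_basis n (mg : 'I_n -> M) (phi : 'I_n -> M -> A) : Prop :=
  [/\ forall k x y, phi k (x + y) = phi k x + phi k y,
      forall k a x, phi k (a *: x) = a * phi k x
    & forall m, m = \sum_(i < n) phi i m *: mg i].

Lemma exists_projective_basis :
  fin_gen M -> projective M -> exists n mg phi, @projective_basis n mg phi.
Proof.
move=> [n [mg mgP]] Mproj.
pose p (r : 'rV[A]_n) : M := \sum_(i < n) r 0 i *: mg i.
have pL : Alinear p.
  split=> [r r'|a r]; rewrite /p ?scaler_sumr -?big_split; apply: eq_bigr => i _.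
    by rewrite mxE scalerDl.
  by rewrite mxE scalerA.
have psurj m : exists r, p r = m.
  by have [c ->] := mgP m; exists (\row_i c i); apply: eq_bigr => i _; rewrite mxE.
have [g [[gD gZ] pg]] := Mproj _ _ p id pL psurj (conj (fun _ _ => erefl) (fun _ _ => erefl)).
exists n, mg, (fun i m => g m 0 i); split=> [k x y|k a x|m]; first by rewrite gD mxE.
  by rewrite gZ mxE.
by rewrite -{1}(pg m).
Qed.

Variables (n : nat) (mg : 'I_n -> M) (phi : 'I_n -> M -> A).
Hypothesis pb : projective_basis mg phi.

Lemma projective_basis_fin_gen : fin_gen M.
Proof. by case: pb => _ _ phiE; exists n, mg => m; exists (phi^~ m). Qed.

Lemma projective_basis_projective : projective M.
Proof.
case: pb => phiD phiZ phiE N P p h [pD pZ] psurj [hD hZ].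
have /fin_all_exists[ns Hns] i := psurj (h (mg i)).
exists (fun m => \sum_(i < n) phi i m *: ns i); split.
  split=> [x y|a x]; rewrite ?scaler_sumr -?big_split; apply: eq_bigr => i _.
    by rewrite phiD scalerDl.
  by rewrite phiZ scalerA.
move=> m; rewrite [in RHS](phiE m) !additive_sum //.
by apply: eq_bigr => i _; rewrite pZ hZ Hns.
Qed.

(* [phi j (mg j) *: x = phi j x *: mg j] says that the localisation where
   [phi j (mg j)] is inverted is generated by [mg j]. *)
Lemma projective_basis_const_rank1 :
  \sum_(i < n) phi i (mg i) = 1 -> (forall j x, phi j (mg j) *: x = phi j x *: mg j) ->
  const_rank1 M.
Proof.
case: pb => _ phiZ _ trace1 mg_gen p [[p0 [pD _]] [p1 _]].
have [j pj] : exists j, ~ p (phi j (mg j)).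
  apply: contrapT => /forallNP pall; apply/p1; rewrite -trace1.
  by apply: (big_ind p) => // i _; apply: contrapT.
exists (mg j); split=> [x | a amg0]; first by exists (phi j (mg j)), (phi j x).
by exists (phi j (mg j)); split=> //; rewrite mulrC -phiZ amg0 -(scale0r 0) phiZ mul0r.
Qed.

End ProjectiveBasis.

Section SubmoduleType.
Variables (A B : comPzRingType) (f : {rmorphism A -> B}) (L : B -> Prop).
Hypothesis HL : Asubmod f L.

(* The unused argument lets the structure instances below depend on [HL]. *)
Definition submod_type of Asubmod f L := {x : B | `[< L x >]}.
Local Notation LT := (submod_type HL).
HB.instance Definition _ := Choice.copy LT {x : B | `[< L x >]}.

Definition submod_elt x (Lx : L x) : LT := exist _ x (asboolT Lx).

Lemma submod_valP (u : LT) : L (val u).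
Proof. exact: asboolW (valP u). Qed.

Let L0 : L 0. Proof. by case: HL. Qed.
Let LD (u v : LT) : L (val u + val v).
Proof. by case: HL => _ [LD _]; apply: LD; apply: submod_valP. Qed.
Let LZ a (u : LT) : L (f a * val u).
Proof. by case: HL => _ [_ LZ]; apply: LZ; apply: submod_valP. Qed.
Let LN (u : LT) : L (- val u).
Proof. by have := LZ (-1) u; rewrite rmorphN1 mulN1r. Qed.

Definition submod_add (u v : LT) := submod_elt (LD u v).
Definition submod_opp (u : LT) := submod_elt (LN u).
Definition submod_scale a (u : LT) := submod_elt (LZ a u).

Lemma submod_addA : associative submod_add.
Proof. by move=> x y z; apply: val_inj; rewrite /= addrA. Qed.
Lemma submod_addC : commutative submod_add.
Proof. by move=> x y; apply: val_inj; rewrite /= addrC. Qed.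
Lemma submod_add0 : left_id (submod_elt L0) submod_add.
Proof. by move=> x; apply: val_inj; rewrite /= add0r. Qed.
Lemma submod_addN : left_inverse (submod_elt L0) submod_opp submod_add.
Proof. by move=> x; apply: val_inj; rewrite /= addNr. Qed.
HB.instance Definition _ :=
  GRing.isZmodule.Build LT submod_addA submod_addC submod_add0 submod_addN.

Lemma submod_scaleA a b v : submod_scale a (submod_scale b v) = submod_scale (a * b) v.
Proof. by apply: val_inj; rewrite /= rmorphM mulrA. Qed.
Lemma submod_scale1 : left_id 1 submod_scale.
Proof. by move=> v; apply: val_inj; rewrite /= rmorph1 mul1r. Qed.
Lemma submod_scaleDr : right_distributive submod_scale +%R.
Proof. by move=> a u v; apply: val_inj; rewrite /= mulrDr. Qed.
Lemma submod_scaleDl v : {morph submod_scale^~ v : a b / a + b}.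
Proof. by move=> a b; apply: val_inj; rewrite /= rmorphD mulrDl. Qed.
HB.instance Definition _ := GRing.Zmodule_isLmodule.Build A LT
  submod_scaleA submod_scale1 submod_scaleDr submod_scaleDl.

Lemma submod_type_iso : iso_to_sub f LT L.
Proof.
exists val; split=> //; split=> //; split; first exact: val_inj.
move=> z; split=> [Lz | [u ->]]; last exact: submod_valP.
by exists (submod_elt Lz).
Qed.

End SubmoduleType.

Lemma invertible_in_Pic (A B : comPzRingType) (f : {rmorphism A -> B}) (L : B -> Prop) :
  injective f -> invertible f L -> exists M : lmodType A, in_Pic M /\ iso_to_sub f M L.
Proof.
move=> finj iL; have HL := proj1 iL.
have [n [xs [ys dL]]] := invertible_dual_basis iL; case: (dL) => Lxs LA H1.
pose mg i := submod_elt HL (Lxs i).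
pose phi i (m : submod_type HL) := preimf f (val m * ys i).
have LAm (m : submod_type HL) i : Aimg f (val m * ys i) by apply: LA; apply: submod_valP.
have pb : projective_basis mg phi.
  split=> [k x y|k a x|m]; rewrite /phi /=.
  - by rewrite mulrDl (preimfD finj (LAm x k) (LAm y k)).
  - by rewrite -[X in preimf f X]mulrA (preimfZ finj _ (LAm x k)).
  apply: val_inj; rewrite (additive_sum _ (fun u v : submod_type HL => erefl (val (u + v)))).
  exact: dual_basis_decomp (submod_valP m).
exists (submod_type HL); split; last exact: submod_type_iso.
split; first exact: projective_basis_fin_gen pb.
split; first exact: projective_basis_projective pb.
apply: projective_basis_const_rank1 pb _ _ => [|j x].
  apply: finj; rewrite rmorph_sum rmorph1 -H1; apply: eq_bigr => i _.
  exact: preimfK (LAm (mg i) i).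
apply: val_inj => /=; rewrite (preimfK (LAm (mg j) j)) (preimfK (LAm x j)) /=; ring.
Qed.

Section CoordinateMatrix.
Variables (A : comPzRingType) (M : lmodType A) (n : nat).
Variables (mg : 'I_n -> M) (phi : 'I_n -> M -> A).
Hypotheses (pb : projective_basis mg phi) (rk : const_rank1 M).

Definition coord_mx i k := phi k (mg i).

Lemma coord_mx_expand k m : phi k m = \sum_(j < n) phi j m * coord_mx j k.
Proof.
case: pb => phiD phiZ phiE; rewrite {1}(phiE m) (additive_sum _ (phiD k)).
by apply: eq_bigr => j _; rewrite phiZ.
Qed.

Lemma coord_mx_idem i k : \sum_(j < n) coord_mx i j * coord_mx j k = coord_mx i k.
Proof. by rewrite [RHS]coord_mx_expand. Qed.

Lemma coord_mx_minor i j l k :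
  coord_mx i j * coord_mx l k = coord_mx i k * coord_mx l j.
Proof.
case: pb => _ phiZ _; apply/eqP; rewrite -subr_eq0; apply/eqP.
apply: locally_zero => P /maximal_ideal_prime pP; have [m0 [m0gen _]] := rk pP.
have [s1 [a1 [Ps1 e1]]] := m0gen (mg i); have [s2 [a2 [Ps2 e2]]] := m0gen (mg l).
have phi_e s a x h : s *: x = a *: m0 -> s * phi h x = a * phi h m0.
  by move=> e; rewrite -phiZ e phiZ.
exists (s1 * s2); first by case: pP => _ [_ PM] /PM[].
rewrite mulrBr; have -> : s1 * s2 * (coord_mx i j * coord_mx l k) =
  (s1 * phi j (mg i)) * (s2 * phi k (mg l)) by rewrite /coord_mx; ring.
have -> : s1 * s2 * (coord_mx i k * coord_mx l j) =
  (s1 * phi k (mg i)) * (s2 * phi j (mg l)) by rewrite /coord_mx; ring.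
by rewrite (phi_e _ _ _ _ e1) (phi_e _ _ _ _ e2) (phi_e _ _ _ _ e1) (phi_e _ _ _ _ e2); ring.
Qed.

Lemma coord_mx_not_in_prime p : is_prime_ideal p -> exists i k, ~ p (coord_mx i k).
Proof.
move=> pp; apply: contrapT => noik.
have pE i k : p (coord_mx i k) by apply: contrapT => pik; apply: noik; exists i, k.
case: pb => _ phiZ phiE; have [[p0 [pD pM]] [p1 pM2]] := pp.
have [m0 [m0gen m0ann]] := rk pp.
(* [Q y]: the image of [y] in the free [A_p]-module [M_p = A_p m0] lies in [p M_p]. *)
pose Q y := exists s a, [/\ ~ p s, p a & s *: y = a *: m0].
have QD x y : Q x -> Q y -> Q (x + y).
  move=> [s [a [ps pa ex]]] [s' [a' [ps' pa' ey]]].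
  exists (s * s'), (s' * a + s * a'); split; first by case/pM2.
    by apply: pD; apply: pM.
  rewrite scalerDr scalerDl.
  have -> : (s * s') *: x = s' *: (s *: x) by rewrite scalerA mulrC.
  by rewrite -scalerA ex ey !scalerA.
have [s [a [ps pa esa]]] : Q m0.
  rewrite [X in Q X]phiE; apply: (big_ind Q) => // [|i _].
    by exists 1, 0; rewrite scale1r scale0r; split=> //; case: pp => _ [].
  have [s [a [ps esa]]] := m0gen (mg i).
  exists s, (phi i m0 * a); split=> //.
    rewrite mulrC; apply: (pM); rewrite coord_mx_expand.
    by apply: (big_ind p) => // j _; apply: pM.
  have -> : s *: (phi i m0 *: mg i) = phi i m0 *: (s *: mg i) by rewrite !scalerA mulrC.
  by rewrite esa scalerA.
have [t [pt ts]] : exists t, ~ p t /\ t * (s - a) = 0.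
  by apply: m0ann; rewrite scalerBl esa subrr.
have : p (t * s).
  have -> : t * s = t * (s - a) + t * a by ring.
  by rewrite ts add0r; apply: pM.
by case/pM2.
Qed.

End CoordinateMatrix.

Section BilinearForm.
Variables (R : comPzRingType) (n : nat) (F : 'I_n -> 'I_n -> R).
Implicit Types (c d : 'I_n -> R).

Definition bilin c d := \sum_(j < n) \sum_(l < n) c j * F j l * d l.

Lemma bilin_perturb c d i k e1 e2 :
  bilin (fun j => c j + (if j == i then e1 else 0)) (fun l => d l + (if l == k then e2 else 0))
  = bilin c d + e2 * (\sum_(j < n) c j * F j k) + e1 * (\sum_(l < n) F i l * d l)
    + e1 * e2 * F i k.
Proof.
have deltar (G : 'I_n -> R) m e : \sum_(l < n) G l * (if l == m then e else 0) = G m * e.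
  by rewrite (bigD1 m) //= eqxx big1 ?addr0 // => l /negbTE ->; rewrite mulr0.
have deltal (G : 'I_n -> R) m e : \sum_(l < n) (if l == m then e else 0) * G l = e * G m.
  by rewrite (bigD1 m) //= eqxx big1 ?addr0 // => l /negbTE ->; rewrite mul0r.
have split_term j l :
    (c j + (if j == i then e1 else 0)) * F j l * (d l + (if l == k then e2 else 0))
  = c j * F j l * d l + c j * F j l * (if l == k then e2 else 0)
    + (if j == i then e1 else 0) * (F j l * d l)
    + (if j == i then e1 else 0) * (F j l * (if l == k then e2 else 0)) by ring.
rewrite /bilin; under eq_bigr => j _ do under eq_bigr => l _ do rewrite split_term.
under eq_bigr => j _ do rewrite !big_split /= deltar -!mulr_sumr deltar.
rewrite !big_split /= !deltal; congr (_ + _ + _ + _).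
- by rewrite mulr_sumr; apply: eq_bigr => j _; ring.
- by ring.
Qed.

Lemma bilin_avoid_prime P c d y i k : is_prime_ideal P -> ~ P y -> ~ P (F i k) ->
  exists c' d' z, bilin c' d' = bilin c d + y * z /\ ~ P (bilin c' d').
Proof.
move=> pP Py PF; set al := \sum_(j < n) c j * F j k; set be := \sum_(l < n) F i l * d l.
pose z t1 t2 := t2 * al + t1 * be + y * (t1 * t2) * F i k.
pose V t1 t2 := bilin c d + y * z t1 t2.
have VE t1 t2 : V t1 t2 = bilin (fun j => c j + (if j == i then y * t1 else 0))
                                (fun l => d l + (if l == k then y * t2 else 0)).
  by rewrite bilin_perturb -/al -/be /V /z; ring.
suff [t1 [t2 PV]] : exists t1 t2, ~ P (V t1 t2).
  exists (fun j => c j + (if j == i then y * t1 else 0)).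
  by exists (fun l => d l + (if l == k then y * t2 else 0)), (z t1 t2); rewrite -VE.
(* The second difference of [V] over [{0,1}^2] is [y^2 F i k]. *)
apply: contrapT => noV; have [iP [_ PM]] := pP.
have PV t1 t2 : P (V t1 t2) by apply: contrapT => PV; apply: noV; exists t1, t2.
have : P (y * (y * F i k)).
  have -> : y * (y * F i k) = (V 1 1 - V 1 0) - (V 0 1 - V 0 0) by rewrite /V /z; ring.
  by apply: idealB => //; apply: idealB.
by case/PM => // /PM[].
Qed.

Section AvoidMaximal.
Hypothesis F_unit_mod : forall P, is_maximal_ideal P -> exists i k, ~ P (F i k).

Lemma bilin_avoid_maximal N (Ms : 'I_N -> R -> Prop) (S : 'I_N -> Prop) P c d :
  is_maximal_ideal P -> (forall t, S t -> is_maximal_ideal (Ms t) /\ ~ Ms t (bilin c d)) ->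
  exists c' d', ~ P (bilin c' d') /\ forall t, S t -> ~ Ms t (bilin c' d').
Proof.
move=> mP SMs; have [PU|PU] := pselect (P (bilin c d)); last first.
  by exists c, d; split=> // t /SMs[].
have pP := maximal_ideal_prime mP.
have [y Py Msy] : exists2 y, ~ P y & forall t, S t -> Ms t y.
  apply: prime_avoiding_elem => // t /SMs[mt MsU]; split; first by case: mt.
  apply: contrapT => /forall2NP MsP; apply: MsU.
  case: mt => _ [_ Msmax]; apply: (Msmax P) => //; first by case: mP.
    by case: mP => _ [].
  by move=> x Msx; case: (MsP x) => // /contrapT.
have [i [k PF]] := F_unit_mod mP.
have [c' [d' [z [E PU']]]] := bilin_avoid_prime c d pP Py PF.
exists c', d'; split=> // t St MsU'; have [[iMs _] MsU] := SMs t St; apply: MsU.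
have -> : bilin c d = bilin c' d' - y * z by rewrite E; ring.
by apply: idealB => //; apply: idealMr => //; apply: Msy.
Qed.

Lemma exists_unit_bilin : finitely_many_maximal_ideals R -> exists c d, unitB (bilin c d).
Proof.
move=> [N [Ms HMs]].
have avoid r : (r <= N)%N -> exists c d,
    forall t : 'I_N, (t < r)%N -> is_maximal_ideal (Ms t) -> ~ Ms t (bilin c d).
  elim: r => [_|r IH rN]; first by exists (fun _ => 0), (fun _ => 0).
  have [c [d cd]] := IH (ltnW rN); pose tr : 'I_N := Ordinal rN.
  have [mtr|mtr] := pselect (is_maximal_ideal (Ms tr)); last first.
    exists c, d => t; rewrite ltnS leq_eqVlt => /predU1P[tE|/cd//].
    by have -> : t = tr by apply: val_inj.
  have [c' [d' [MsU' cd']]] := bilin_avoid_maximal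
    (S := fun t : 'I_N => (t < r)%N /\ is_maximal_ideal (Ms t)) mtr
    (fun t '(conj lt mt) => conj mt (cd t lt mt)).
  exists c', d' => t; rewrite ltnS leq_eqVlt => /predU1P[tE|lt mt]; last exact: cd'.
  by have -> : t = tr by apply: val_inj.
have [c [d cd]] := avoid N (leqnn N); exists c, d; apply: unit_of_not_maximal => P mP.
have [t Ht] := HMs P mP; have PE : P = Ms t by apply/funext => x; apply/propext.
by rewrite PE in mP *; apply: cd.
Qed.

End AvoidMaximal.

End BilinearForm.

Section RankOneIdempotent.
Variables (R : comPzRingType) (n : nat) (F : 'I_n -> 'I_n -> R).
Hypothesis F_idem : forall i k, \sum_(j < n) F i j * F j k = F i k.
Hypothesis F_minor : forall i j l k, F i j * F l k = F i k * F l j.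

Lemma rank_one_idempotent_factor c d u' : bilin F c d * u' = 1 ->
  exists a v : 'I_n -> R, (forall i k, F i k = a i * v k) /\ \sum_(k < n) v k * a k = 1.
Proof.
move=> Uu'; exists (fun i => (\sum_(l < n) F i l * d l) * u'), (fun k => \sum_(j < n) c j * F j k).
split=> [i k | ].
  have E : (\sum_(l < n) F i l * d l) * (\sum_(j < n) c j * F j k) = F i k * bilin F c d.
    rewrite big_distrlr /= /bilin mulr_sumr exchange_big; apply: eq_bigr => j _.
    rewrite mulr_sumr; apply: eq_bigr => l _.
    by transitivity (c j * d l * (F i l * F j k)); [ring | rewrite F_minor; ring].
  by rewrite mulrAC E -mulrA Uu' mulr1.
have E : \sum_(k < n) (\sum_(j < n) c j * F j k) * (\sum_(l < n) F k l * d l) = bilin F c d.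
  under eq_bigr => k _ do rewrite big_distrlr /=.
  rewrite exchange_big; apply: eq_bigr => j _; rewrite exchange_big; apply: eq_bigr => l _.
  rewrite -F_idem mulr_sumr mulr_suml; apply: eq_bigr => k _; ring.
by under eq_bigr => k _ do rewrite mulrA; rewrite -mulr_suml E.
Qed.

End RankOneIdempotent.

Section PicToInvertible.
Variables (A B : comPzRingType) (f : {rmorphism A -> B}).

Lemma prime_ideal_preim (q : B -> Prop) : is_prime_ideal q -> is_prime_ideal (fun a => q (f a)).
Proof.
move=> [[q0 [qD qM]] [q1 qP]]; split; [split; [|split] | split].
- by rewrite rmorph0.
- by move=> x y qx qy; rewrite rmorphD; apply: qD.
- by move=> r x qx; rewrite rmorphM; apply: qM.
- by rewrite rmorph1.
- by move=> x y; rewrite rmorphM; apply: qP.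
Qed.

Lemma image_invertible (M : lmodType A) (theta : M -> B) n (mg : 'I_n -> M) (v : 'I_n -> B) :
  (forall x y, theta (x + y) = theta x + theta y) ->
  (forall a x, theta (a *: x) = f a * theta x) ->
  (forall m k, Aimg f (theta m * v k)) -> \sum_(i < n) theta (mg i) * v i = 1 ->
  invertible f (fun z => exists m, z = theta m).
Proof.
move=> thetaD thetaZ thetavA thetav1.
have theta0 : theta 0 = 0 by apply: (addrI (theta 0)); rewrite -thetaD !addr0.
split.
  split; first by exists 0.
  split; first by move=> _ _ [x ->] [y ->]; exists (x + y).
  by move=> a _ [x ->]; exists (a *: x).
exists (fun z => exists c : 'I_n -> A, z = \sum_(k < n) f (c k) * v k); split.
  split; first by exists (fun _ => 0); rewrite big1 // => k _; rewrite rmorph0 mul0r.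
  split.
    move=> _ _ [c ->] [c' ->]; exists (fun k => c k + c' k).
    by rewrite -big_split; apply: eq_bigr => k _; rewrite rmorphD mulrDl.
  move=> a _ [c ->]; exists (fun k => a * c k).
  by rewrite mulr_sumr; apply: eq_bigr => k _; rewrite rmorphM mulrA.
move=> z; split.
  move=> [m [xs [ys [Hs ->]]]]; apply: Aimg_sum => p; have [[x ->] [c ->]] := Hs p.
  rewrite mulr_sumr; apply: Aimg_sum => k; rewrite mulrCA; apply: AimgM; first by exists (c k).
  exact: thetavA.
move=> [b ->]; exists n, (fun i => theta (b *: mg i)), v; split.
  move=> i; split; first by exists (b *: mg i).
  exists (fun k => if k == i then 1 else 0).
  rewrite (bigD1 i) //= eqxx rmorph1 mul1r big1 ?addr0 // => k /negbTE ->.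
  by rewrite rmorph0 mul0r.
by rewrite -[LHS]mulr1 -thetav1 mulr_sumr; apply: eq_bigr => i _; rewrite thetaZ mulrA.
Qed.

Hypothesis finj : injective f.

Lemma in_Pic_invertible (M : lmodType A) : finitely_many_maximal_ideals B -> in_Pic M ->
  exists L, invertible f L /\ iso_to_sub f M L.
Proof.
move=> Bfin [Mfg [Mproj rk]].
have [n [mg [phi pb]]] := exists_projective_basis Mfg Mproj.
pose F j l := f (coord_mx mg phi j l).
have F_unit_mod q : is_maximal_ideal q -> exists i k, ~ q (F i k).
  by move/maximal_ideal_prime/prime_ideal_preim; apply: coord_mx_not_in_prime.
have [c [d [u' Uu']]] := exists_unit_bilin F_unit_mod Bfin.
have F_idem i k : \sum_(j < n) F i j * F j k = F i k.
  by rewrite /F -(coord_mx_idem pb) rmorph_sum; apply: eq_bigr => j _; rewrite rmorphM.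
have F_minor i j l k : F i j * F l k = F i k * F l j.
  by rewrite /F -!rmorphM (coord_mx_minor pb rk).
have [a [v [Fav va]]] := rank_one_idempotent_factor F_idem F_minor Uu'.
pose theta m := \sum_(j < n) f (phi j m) * a j.
have theta_v m k : theta m * v k = f (phi k m).
  rewrite /theta mulr_suml (coord_mx_expand pb k m) rmorph_sum.
  by apply: eq_bigr => j _; rewrite rmorphM -mulrA -Fav.
case: pb => phiD phiZ phiE.
have thetaD x y : theta (x + y) = theta x + theta y.
  by rewrite /theta -big_split; apply: eq_bigr => j _; rewrite phiD rmorphD mulrDl.
have thetaZ b x : theta (b *: x) = f b * theta x.
  by rewrite /theta mulr_sumr; apply: eq_bigr => j _; rewrite phiZ rmorphM mulrA.
exists (fun z => exists m, z = theta m); split.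
  apply: (image_invertible (mg := mg) (v := v)) => // [m k|].
    by rewrite theta_v; exists (phi k m).
  rewrite -va; apply: eq_bigr => i _.
  by rewrite theta_v -/(coord_mx mg phi i i) -/(F i i) Fav mulrC.
exists theta; split=> //; split=> //; split=> // x y Exy.
rewrite (phiE x) (phiE y); apply: eq_bigr => k _; congr (_ *: _).
by apply: finj; rewrite -!theta_v Exy.
Qed.

End PicToInvertible.

Theorem corollary4p6 (A B : comPzRingType) (f : {rmorphism A -> B}) :
  injective f ->
  finitely_many_maximal_ideals B ->
  [/\ (forall L : B -> Prop, invertible f L ->
         exists M : lmodType A, in_Pic M /\ iso_to_sub f M L),
      (forall L L' : B -> Prop, invertible f L -> invertible f L' ->
         same_class f L L' -> submod_iso f L L'),
      (forall L L' : B -> Prop, invertible f L -> invertible f L' ->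
         mult_is_tensor f L L'),
      (forall L L' : B -> Prop, invertible f L -> invertible f L' ->
         submod_iso f L L' -> same_class f L L')
    & (forall M : lmodType A, in_Pic M ->
         exists L : B -> Prop, invertible f L /\ iso_to_sub f M L)].
Proof.
move=> finj Bfin; split.
- by move=> L; apply: invertible_in_Pic.
- by move=> L L' [HL _] _; apply: same_class_submod_iso.
- exact: invertible_mult_is_tensor.
- exact: submod_iso_same_class.
- by move=> M; apply: in_Pic_invertible.
Qed.
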